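(* Let the setting, algorithm and notation be as described in the context. Assume $\tau\in(0,(1+\sqrt5)/2)$ and that for some $\alpha\in(\tau/\min(1+\tau,1+\tau^{-1}),1]$, \[ \widehat\Sigma_f+S\succeq0,\quad H_f\succeq0,\quad \tfrac12\widehat\Sigma_g+T\succeq0,\quad M_g\succ0 . \] For $k\ge1$ let $\hat x^k:=\frac1k\sum_{i=1}^k x^{i+1}$, $\hat y^k:=\frac1k\sum_{i=1}^k y^{i+1}$, $\hat z^k:=\frac1k\sum_{i=1}^k\tilde z^{i+1}$. Then for every $k\ge1$ and every $(x,y,z)\in\mathcal X\times\mathcal Y\times\mathcal Z$, \[ \big(p(\hat x^k)+q(\hat y^k)\big)-\big(p(x)+q(y)\big)+\langle\hat x^k-x,\nabla f(x)+Az\rangle+\langle\hat y^k-y,\nabla g(y)+Bz\rangle+\langle\hat z^k-z,-(A^*x+B^*y-c)\rangle\le\frac{\phi_1(x,y,z)+\big(1-\alpha\min(\tau,\tau^{-1})\big)\sigma\|r^1\|^2+\alpha\xi_1}{2k}. \]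
   Context: Let $\mathcal X,\mathcal Y,\mathcal Z$ be finite-dimensional real Euclidean spaces with inner products $\langle\cdot,\cdot\rangle$ and induced norms $\|\cdot\|$. Let $p:\mathcal X\to(-\infty,+\infty]$ and $q:\mathcal Y\to(-\infty,+\infty]$ be closed proper convex functions, and let $f:\mathcal X\to\mathbb R$, $g:\mathcal Y\to\mathbb R$ be convex differentiable functions with Lipschitz continuous gradients. Let $A:\mathcal Z\to\mathcal X$, $B:\mathcal Z\to\mathcal Y$ be linear maps with adjoints $A^*,B^*$, and $c\in\mathcal Z$. Let $\Sigma_f,\widehat\Sigma_f$ (on $\mathcal X$) and $\Sigma_g,\widehat\Sigma_g$ (on $\mathcal Y$) be self-adjoint positive semidefinite linear operators with $\widehat\Sigma_f\succeq\Sigma_f$, $\widehat\Sigma_g\succeq\Sigma_g$, such that for all $x,x'\in\mathcal X$, $y,y'\in\mathcal Y$: $f(x')+\langle x-x',\nabla f(x')\rangle+\frac12\|x-x'\|^2_{\Sigma_f}\le f(x)\le f(x')+\langle x-x',\nabla f(x')\rangle+\frac12\|x-x'\|^2_{\widehat\Sigma_f}$ and the analogous two inequalities for $g$ with $\Sigma_g,\widehat\Sigma_g$. For a self-adjoint (possibly indefinite) operator $G$, $\|u\|_G^2:=\langle u,Gu\rangle$. Algorithm (Majorized iPADMM): let $\sigma>0$, $\tau>0$, and let $S:\mathcal X\to\mathcal X$, $T:\mathcal Y\to\mathcal Y$ be self-adjoint, possibly indefinite, linear operators with $\widehat\Sigma_f+S+\sigma AA^*\succeq0$ and $\widehat\Sigma_g+T+\sigma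 BB^*\succeq0$. Starting from $(x^0,y^0,z^0)\in\mathrm{dom}(p)\times\mathrm{dom}(q)\times\mathcal Z$, for $k=0,1,\dots$: $x^{k+1}\in\arg\min_{x}\{p(x)+\langle\nabla f(x^k),x\rangle+\frac12\|x-x^k\|^2_{\widehat\Sigma_f+S}+\langle z^k,A^*x\rangle+\frac\sigma2\|A^*x+B^*y^k-c\|^2\}$, $y^{k+1}\in\arg\min_{y}\{q(y)+\langle\nabla g(y^k),y\rangle+\frac12\|y-y^k\|^2_{\widehat\Sigma_g+T}+\langle z^k,B^*y\rangle+\frac\sigma2\|A^*x^{k+1}+B^*y-c\|^2\}$, $z^{k+1}=z^k+\tau\sigma(A^*x^{k+1}+B^*y^{k+1}-c)$ (the minimizers are assumed to exist). Notation: $r^k:=A^*x^k+B^*y^k-c$, $\tilde z^{k+1}:=z^k+\sigma r^{k+1}$; for $\alpha\in(0,1]$, $H_f:=\frac12\Sigma_f+S+\frac12(1-\alpha)\sigma AA^*$ and $M_g:=\frac12\Sigma_g+T+\min(\tau,1+\tau-\tau^2)\alpha\sigma BB^*$; $\phi_1(x,y,z):=(\tau\sigma)^{-1}\|z^1-z\|^2+\|x^1-x\|^2_{\widehat\Sigma_f+S}+\|y^1-y\|^2_{\widehat\Sigma_g+T}+\sigma\|A^*x+B^*y^1-c\|^2$; $\xi_1:=\|y^1-y^0\|^2_{\widehat\Sigma_g+T}$. *)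

(* finite-dimensional real Euclidean spaces are modelled as
   column vectors 'cV[R]_n with the standard inner product; linear maps as
   matrices (adjoint = transpose); extended-valued functions take values in
   \bar R (mathcomp-analysis constructive_ereal). *)
From HB Require Import structures.
From mathcomp Require Import all_boot all_order all_algebra.
From mathcomp Require Import reals constructive_ereal.
Set Implicit Arguments. Unset Strict Implicit. Unset Printing Implicit Defensive.
Import Order.TTheory GRing.Theory Num.Theory.
Local Open Scope ring_scope.

Definition dotv (R : realType) n (u v : 'cV[R]_n) : R :=
  \sum_(i < n) u i ord0 * v i ord0.
Definition enorm (R : realType) n (u : 'cV[R]_n) : R := Num.sqrt (dotv u u).
(* ||u||_G^2 := <u, G u> *)
Definition qnorm (R : realType) n (G : 'M[R]_n) (u : 'cV[R]_n) : R :=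
  dotv u (G *m u).

Definition self_adjoint (R : realType) n (G : 'M[R]_n) : Prop := G^T = G.
Definition psd (R : realType) n (G : 'M[R]_n) : Prop :=
  forall u : 'cV[R]_n, 0 <= qnorm G u.
Definition pd (R : realType) n (G : 'M[R]_n) : Prop :=
  forall u : 'cV[R]_n, u != 0 -> 0 < qnorm G u.

Definition eproper (R : realType) n (p : 'cV[R]_n -> \bar R) : Prop :=
  (forall x, p x != -oo%E) /\ (exists x, p x != +oo%E).
Definition econvex (R : realType) n (p : 'cV[R]_n -> \bar R) : Prop :=
  forall x y : 'cV[R]_n, (p x < +oo)%E -> (p y < +oo)%E ->
  forall t : R, 0 <= t <= 1 ->
  (p (t *: x + (1 - t) *: y)%R <= t%:E * p x + (1 - t)%:E * p y)%E.
(* closed = lower semicontinuous *)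
Definition elsc (R : realType) n (p : 'cV[R]_n -> \bar R) : Prop :=
  forall (x : 'cV[R]_n) (a : R), (a%:E < p x)%E ->
  exists2 d : R, 0 < d & forall u, enorm (u - x) < d -> (a%:E < p u)%E.
Definition closed_proper_convex (R : realType) n (p : 'cV[R]_n -> \bar R) :=
  [/\ eproper p, econvex p & elsc p].

Definition convex_fun (R : realType) n (f : 'cV[R]_n -> R) : Prop :=
  forall (x y : 'cV[R]_n) (t : R), 0 <= t <= 1 ->
  f (t *: x + (1 - t) *: y) <= t * f x + (1 - t) * f y.
Definition is_gradient (R : realType) n (f : 'cV[R]_n -> R)
    (gf : 'cV[R]_n -> 'cV[R]_n) : Prop :=
  forall (x : 'cV[R]_n) (e : R), 0 < e ->
  exists2 d : R, 0 < d & forall h : 'cV[R]_n, enorm h < d ->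
    `|f (x + h) - f x - dotv (gf x) h| <= e * enorm h.
Definition lipschitz_map (R : realType) n (g : 'cV[R]_n -> 'cV[R]_n) : Prop :=
  exists L : R, forall x y, enorm (g x - g y) <= L * enorm (x - y).

Definition quad_sandwich (R : realType) n (f : 'cV[R]_n -> R)
    (gf : 'cV[R]_n -> 'cV[R]_n) (Sig Sigh : 'M[R]_n) : Prop :=
  forall x x' : 'cV[R]_n,
    f x' + dotv (x - x') (gf x') + qnorm Sig (x - x') / 2 <= f x /\
    f x <= f x' + dotv (x - x') (gf x') + qnorm Sigh (x - x') / 2.

Definition xobj (R : realType) nx ny nz (p : 'cV[R]_nx -> \bar R)
    (gradf : 'cV[R]_nx -> 'cV[R]_nx) (Sfh S : 'M[R]_nx)
    (A : 'M[R]_(nx, nz)) (B : 'M[R]_(ny, nz)) (c : 'cV[R]_nz) (sigma : R)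
    (xk : 'cV[R]_nx) (yk : 'cV[R]_ny) (zk : 'cV[R]_nz) (x' : 'cV[R]_nx) : \bar R :=
  (p x' + (dotv (gradf xk) x' + qnorm (Sfh + S) (x' - xk) / 2
           + dotv zk (A^T *m x')
           + sigma / 2 * dotv (A^T *m x' + B^T *m yk - c)
                              (A^T *m x' + B^T *m yk - c))%:E)%E.

Definition yobj (R : realType) nx ny nz (q : 'cV[R]_ny -> \bar R)
    (gradg : 'cV[R]_ny -> 'cV[R]_ny) (Sgh T : 'M[R]_ny)
    (A : 'M[R]_(nx, nz)) (B : 'M[R]_(ny, nz)) (c : 'cV[R]_nz) (sigma : R)
    (xk1 : 'cV[R]_nx) (yk : 'cV[R]_ny) (zk : 'cV[R]_nz) (y' : 'cV[R]_ny) : \bar R :=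
  (q y' + (dotv (gradg yk) y' + qnorm (Sgh + T) (y' - yk) / 2
           + dotv zk (B^T *m y')
           + sigma / 2 * dotv (A^T *m xk1 + B^T *m y' - c)
                              (A^T *m xk1 + B^T *m y' - c))%:E)%E.

Definition resid (R : realType) nx ny nz (A : 'M[R]_(nx, nz)) (B : 'M[R]_(ny, nz))
    (c : 'cV[R]_nz) (x : 'cV[R]_nx) (y : 'cV[R]_ny) : 'cV[R]_nz :=
  A^T *m x + B^T *m y - c.

Definition ergavg (R : realType) n (u : nat -> 'cV[R]_n) (k : nat) : 'cV[R]_n :=
  k%:R^-1 *: \sum_(1 <= i < k.+1) u i.+1.

(* Each subproblem's optimality condition is a variational inequality.  Combined with
   the two-sided quadratic bounds on f and g and with the multiplier update, one step
   of the method gives  2 gap(k+1) <= Phi(k) - Phi(k+1)  for the Lyapunov function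
     Phi(k) = (tau sigma)^-1 |z^k - z|^2 + |x^k - x|^2_(Sfh+S) + |y^k - y|^2_(Sgh+T)
              + sigma |A^* x + B^* y^k - c|^2 + (1 - alpha min(tau, 1/tau)) sigma |r^k|^2
              + alpha |y^k - y^(k-1)|^2_(Sgh+T),
   the lower bound on alpha being exactly what makes the leftover residual cross terms
   nonnegative.  Telescoping, Phi >= 0 and Jensen's inequality for p and q bound the
   gap at the ergodic averages by Phi(1) / (2k). *)

From HB Require Import structures.
From mathcomp Require Import all_boot all_order all_algebra.
From mathcomp Require Import reals constructive_ereal.
From mathcomp Require Import ring lra.
Import Order.TTheory GRing.Theory Num.Theory.
Local Open Scope ring_scope.
Set Implicit Arguments. Unset Strict Implicit. Unset Printing Implicit Defensive.

Section InnerProduct.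
Variable R : realType.

Lemma dotvC n (u v : 'cV[R]_n) : dotv u v = dotv v u.
Proof. by rewrite /dotv; apply: eq_bigr => i _; rewrite mulrC. Qed.

Lemma dotvDl n (u v w : 'cV[R]_n) : dotv (u + v) w = dotv u w + dotv v w.
Proof. by rewrite /dotv -big_split; apply: eq_bigr => i _; rewrite !mxE mulrDl. Qed.

Lemma dotvDr n (u v w : 'cV[R]_n) : dotv w (u + v) = dotv w u + dotv w v.
Proof. by rewrite dotvC dotvDl !(dotvC w). Qed.

Lemma dotvZl n a (u w : 'cV[R]_n) : dotv (a *: u) w = a * dotv u w.
Proof. by rewrite /dotv mulr_sumr; apply: eq_bigr => i _; rewrite !mxE mulrA. Qed.

Lemma dotvZr n a (u w : 'cV[R]_n) : dotv w (a *: u) = a * dotv w u.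
Proof. by rewrite dotvC dotvZl dotvC. Qed.

Lemma dotvNl n (u w : 'cV[R]_n) : dotv (- u) w = - dotv u w.
Proof. by rewrite -scaleN1r dotvZl mulN1r. Qed.

Lemma dotvNr n (u w : 'cV[R]_n) : dotv w (- u) = - dotv w u.
Proof. by rewrite dotvC dotvNl dotvC. Qed.

Lemma dotvBl n (u v w : 'cV[R]_n) : dotv (u - v) w = dotv u w - dotv v w.
Proof. by rewrite dotvDl dotvNl. Qed.

Lemma dotv0l n (w : 'cV[R]_n) : dotv 0 w = 0.
Proof. by rewrite -(scale0r (0 : 'cV[R]_n)) dotvZl mul0r. Qed.

Lemma dotv0r n (w : 'cV[R]_n) : dotv w 0 = 0.
Proof. by rewrite dotvC dotv0l. Qed.

Lemma dotv_ge0 n (u : 'cV[R]_n) : 0 <= dotv u u.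
Proof. by rewrite /dotv; apply: sumr_ge0 => i _; rewrite -expr2 sqr_ge0. Qed.

Lemma dotv_mulmxl m n (M : 'M[R]_(m, n)) (u : 'cV[R]_n) (v : 'cV[R]_m) :
  dotv (M *m u) v = dotv u (M^T *m v).
Proof.
rewrite /dotv; under eq_bigr do rewrite !mxE big_distrl /=.
rewrite exchange_big /=; apply: eq_bigr => j _.
by rewrite !mxE big_distrr /=; apply: eq_bigr => i _; rewrite !mxE; ring.
Qed.

Lemma dotv_mulmxr m n (M : 'M[R]_(m, n)) (u : 'cV[R]_n) (v : 'cV[R]_m) :
  dotv v (M *m u) = dotv (M^T *m v) u.
Proof. by rewrite dotvC dotv_mulmxl dotvC. Qed.

Lemma dotv_suml n (I : Type) (r : seq I) (P : pred I) (F : I -> 'cV[R]_n) w :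
  dotv (\sum_(i <- r | P i) F i) w = \sum_(i <- r | P i) dotv (F i) w.
Proof.
by apply: (big_morph (fun v => dotv v w)) => [u v|]; rewrite ?dotvDl ?dotv0l.
Qed.

(* A copy of [dotv] that [lra] sees as an opaque atom: rewriting every
   [dotv u v] into the average of [dotv_atom u v] and [dotv_atom v u] makes
   symmetric occurrences syntactically identical. *)
Definition dotv_atom n (u v : 'cV[R]_n) := dotv u v.

Lemma dotv_symmetrize n (u v : 'cV[R]_n) :
  dotv u v = (dotv_atom u v + dotv_atom v u) / 2.
Proof. rewrite /dotv_atom (dotvC v u); lra. Qed.

Lemma dotv_symmetrize_sym n (M : 'M[R]_n) : M^T = M -> forall u v : 'cV[R]_n,
  dotv u (M *m v) = (dotv_atom u (M *m v) + dotv_atom v (M *m u)) / 2.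
Proof.
move=> hM u v; rewrite /dotv_atom.
have -> : dotv v (M *m u) = dotv u (M *m v) by rewrite dotv_mulmxr hM dotvC.
lra.
Qed.

End InnerProduct.

Ltac dotv_expand := repeat (progress (rewrite ?(mulmxDr, mulmxN, mulmxDl, mulNmx,
   dotvDl, dotvDr, dotvNl, dotvNr, dotvZl, dotvZr, trmxK, trmx_mul, mulmx0, mul0mx,
   dotv0l, dotv0r) -?scalemxAr -?scalemxAl -?mulmxA)).

Section Toolbox.
Variable R : realType.

Lemma qnorm_add_gram n m (M : 'M[R]_n) (N : 'M[R]_(n, m)) k (u : 'cV[R]_n) :
  qnorm (M + k *: (N *m N^T)) u = qnorm M u + k * dotv (N^T *m u) (N^T *m u).
Proof.
by rewrite /qnorm mulmxDl dotvDr -scalemxAl dotvZr -mulmxA (dotv_mulmxr N).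
Qed.

Lemma pd_psd n (M : 'M[R]_n) : pd M -> psd M.
Proof.
move=> hM u; have [->|u0] := eqVneq u 0; last exact: ltW (hM u u0).
by rewrite /qnorm mulmx0 dotv0r.
Qed.

Lemma psd_add_half n (G H : 'M[R]_n) : psd G -> psd (2^-1 *: G + H) -> psd (G + H).
Proof.
move=> hG hGH u; have := hG u; have := hGH u.
rewrite /qnorm !mulmxDl !dotvDr -scalemxAl dotvZr; lra.
Qed.

Lemma fin_num_addr (a : \bar R) (r : R) :
  a != -oo%E -> (a + r%:E < +oo)%E -> a \is a fin_num.
Proof. by case: a. Qed.

Lemma ge0_of_small_perturbation (a Q : R) :
  (forall t, 0 < t -> t <= 1 -> 0 <= a + t * Q) -> 0 <= a.
Proof.
move=> H; rewrite leNgt; apply/negP => a_lt0.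
have hQa : 0 < `|Q| - a by have := normr_ge0 Q; lra.
pose t := - a / (2 * (`|Q| - a)).
have t_gt0 : 0 < t by rewrite divr_gt0 //; lra.
have t_le1 : t <= 1 by rewrite ler_pdivrMr; [have := normr_ge0 Q; lra | lra].
have tQ : t * Q <= t * `|Q| by rewrite ler_pM2l // real_ler_norm ?num_real.
have tQa : t * `|Q| <= - a / 2.
  rewrite /t mulrAC ler_pdivrMr; last lra.
  by rewrite mulrAC -mulrA ler_pM2l; [have := normr_ge0 Q; lra | lra].
by have := H t t_gt0 t_le1; lra.
Qed.

(* Compare [u] with [u + t (v - u)] and let [t] go to 0. *)
Lemma econvex_min_vi n (p : 'cV[R]_n -> \bar R) (h : 'cV[R]_n -> R)
    (u gr : 'cV[R]_n) (Qd : 'cV[R]_n -> R) :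
  econvex p -> p u \is a fin_num ->
  (forall v, (p u + (h u)%:E <= p v + (h v)%:E)%E) ->
  (forall d t, h (u + t *: d) = h u + t * dotv gr d + t ^+ 2 * Qd d) ->
  forall v, p v \is a fin_num -> 0 <= fine (p v) - fine (p u) + dotv gr (v - u).
Proof.
move=> hcvx pu hmin hexp v pv.
apply: (@ge0_of_small_perturbation _ (Qd (v - u))) => t t_gt0 t_le1.
have ht : 0 <= t <= 1 by rewrite (ltW t_gt0) t_le1.
have := hcvx _ _ (_ : p v < +oo)%E (_ : p u < +oo)%E t ht.
rewrite !ltey_eq pu pv => /(_ isT isT).
have -> : t *: v + (1 - t) *: u = u + t *: (v - u).
  by rewrite scalerBl scale1r scalerBr addrCA.
move=> /(leeD2r (h (u + t *: (v - u)))%:E) /(le_trans (hmin _)).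
rewrite -(fineK pv) -(fineK pu) -!EFinM -!EFinD lee_fin hexp expr2.
move: (fine (p v)) (fine (p u)) => Pv Pu hle.
have : 0 <= t * (Pv - Pu + dotv gr (v - u) + t * Qd (v - u)) by lra.
by rewrite pmulr_rge0.
Qed.

Definition subproblem_smooth n m (g0 v0 : 'cV[R]_n) (F : 'M[R]_n)
    (z e : 'cV[R]_m) (M : 'M[R]_(n, m)) (sigma : R) (v : 'cV[R]_n) : R :=
  dotv g0 v + qnorm F (v - v0) / 2 + dotv z (M^T *m v)
  + sigma / 2 * dotv (M^T *m v + e) (M^T *m v + e).

Lemma subproblem_smooth_expand n m (g0 v0 : 'cV[R]_n) (F : 'M[R]_n)
    (z e : 'cV[R]_m) (M : 'M[R]_(n, m)) sigma (u d : 'cV[R]_n) t :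
  F^T = F ->
  subproblem_smooth g0 v0 F z e M sigma (u + t *: d) =
  subproblem_smooth g0 v0 F z e M sigma u
  + t * dotv (g0 + F *m (u - v0) + M *m (z + sigma *: (M^T *m u + e))) d
  + t ^+ 2 * (qnorm F d / 2 + sigma / 2 * dotv (M^T *m d) (M^T *m d)).
Proof.
move=> hF; rewrite /subproblem_smooth /qnorm.
dotv_expand; rewrite ?(dotv_mulmxl M) ?(dotv_mulmxr M); dotv_expand.
rewrite ?(dotvC (F *m _)) ?(dotv_symmetrize_sym hF) ?dotv_symmetrize; lra.
Qed.

Lemma subproblem_vi n m (p : 'cV[R]_n -> \bar R) (g0 v0 : 'cV[R]_n)
    (F : 'M[R]_n) (z e : 'cV[R]_m) (M : 'M[R]_(n, m)) sigma (u : 'cV[R]_n) :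
  F^T = F -> econvex p -> p u \is a fin_num ->
  (forall v, (p u + (subproblem_smooth g0 v0 F z e M sigma u)%:E
              <= p v + (subproblem_smooth g0 v0 F z e M sigma v)%:E)%E) ->
  forall v, p v \is a fin_num ->
  0 <= fine (p v) - fine (p u)
       + dotv (g0 + F *m (u - v0) + M *m (z + sigma *: (M^T *m u + e))) (v - u).
Proof.
move=> hF hcvx pu hmin; apply: econvex_min_vi hmin _ => // d t.
exact: subproblem_smooth_expand.
Qed.

Lemma econvex_ergavg n (p : 'cV[R]_n -> \bar R) (u : nat -> 'cV[R]_n) :
  econvex p -> (forall j, p (u j) \is a fin_num) ->
  forall k, (1 <= k)%N ->
  (p (ergavg u k) <= (k%:R^-1 * \sum_(1 <= i < k.+1) fine (p (u i.+1)))%:E)%E.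
Proof.
move=> hcvx pu; case=> // k _; elim: k => [|k IH].
  by rewrite /ergavg !big_nat1 invr1 scale1r mul1r fineK.
have k1_gt0 : (0 : R) < k.+1%:R by rewrite ltr0n.
have k2_gt0 : (0 : R) < k.+2%:R by rewrite ltr0n.
pose t : R := k.+1%:R / k.+2%:R.
have t01 : 0 <= t <= 1.
  by rewrite /t ler_pdivrMr // mul1r ler_nat leqnSn andbT divr_ge0 // ltW.
have avgE : ergavg u k.+2 = t *: ergavg u k.+1 + (1 - t) *: u k.+3.
  rewrite /ergavg (big_nat_recr k.+2) //= scalerDr scalerA.
  by congr (_ *: _ + _ *: _); rewrite /t; field; rewrite !gt_eqF //; lra.
have avg_fin : (p (ergavg u k.+1) < +oo)%E by apply: le_lt_trans IH _; rewrite ltry.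
have uk_fin : (p (u k.+3) < +oo)%E by rewrite ltey_eq pu.
rewrite avgE; apply: le_trans (hcvx _ _ avg_fin uk_fin t t01) _.
rewrite -(fineK (pu k.+3)) -EFinM.
apply: le_trans (leeD2r _ (lee_wpmul2l _ IH)) _; first by rewrite lee_fin; case/andP: t01.
rewrite -!EFinM -EFinD lee_fin (big_nat_recr k.+2) //= le_eqVlt; apply/orP; left.
by apply/eqP; rewrite /t; field; rewrite !gt_eqF //; lra.
Qed.

Lemma dotv_ergavg n (u : nat -> 'cV[R]_n) (v w : 'cV[R]_n) k : (1 <= k)%N ->
  dotv (ergavg u k - v) w = k%:R^-1 * \sum_(1 <= i < k.+1) dotv (u i.+1 - v) w.
Proof.
move=> k_gt0; have k0 : (k%:R : R) != 0 by rewrite pnatr_eq0 -lt0n.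
rewrite /ergavg dotvBl dotvZl dotv_suml.
under [in RHS]eq_bigr do rewrite dotvBl.
by rewrite sumrB sumr_const_nat subn1 /= -mulr_natr; field.
Qed.

End Toolbox.

Section Estimates.
Variable R : realType.

Lemma block_step_estimate n (f : 'cV[R]_n -> R) (gradf : 'cV[R]_n -> 'cV[R]_n)
    (Sf Sfh S : 'M[R]_n) (x x0 x1 w : 'cV[R]_n) (Px P1 E : R) :
  self_adjoint Sf -> self_adjoint Sfh -> self_adjoint S -> psd Sf ->
  quad_sandwich f gradf Sf Sfh ->
  0 <= Px - P1 + dotv (gradf x0 + (Sfh + S) *m (x1 - x0) + w) (x - x1) ->
  0 <= qnorm (2^-1 *: Sf + S) (x1 - x0) + E ->
  2 * (P1 - Px + dotv (x1 - x) (gradf x))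
  <= qnorm (Sfh + S) (x0 - x) - qnorm (Sfh + S) (x1 - x) + E + 2 * dotv w (x - x1).
Proof.
move=> hSf hSfh hS psSf sandwich vi hE.
have [lb_x _] := sandwich x x0.
have [_ ub_x1] := sandwich x1 x0.
have [lb_x1 _] := sandwich x1 x.
have := psSf (x - x0 - (x1 - x)).
move: vi hE lb_x ub_x1 lb_x1; rewrite /qnorm; dotv_expand.
rewrite ?(dotvC (Sf *m _)) ?(dotvC (Sfh *m _)) ?(dotvC (S *m _)).
rewrite ?(dotv_symmetrize_sym hSf) ?(dotv_symmetrize_sym hSfh).
rewrite ?(dotv_symmetrize_sym hS) ?dotv_symmetrize.
move=> *; lra.
Qed.

(* Evaluate the two-sided bounds at [b + s] and [a - s], with [s] half the second
   difference [c - 2b + a]. *)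
Lemma dotv_grad_increment_ge n (g : 'cV[R]_n -> R) (gradg : 'cV[R]_n -> 'cV[R]_n)
    (Sg Sgh : 'M[R]_n) (a b c : 'cV[R]_n) :
  self_adjoint Sgh -> psd Sg -> quad_sandwich g gradg Sg Sgh ->
  - (qnorm Sgh (c - b - (b - a)) / 4) <= dotv (gradg b - gradg a) (c - b).
Proof.
move=> hSgh psSg sandwich.
set s := 2^-1 *: (c - b - (b - a)).
have [h1 _] := sandwich (b + s) a.
have [_ h2] := sandwich (b + s) b.
have [h3 _] := sandwich a b.
have [h4 _] := sandwich (a - s) b.
have [_ h5] := sandwich (a - s) a.
have [h6 _] := sandwich b a.
have k1 := psSg (b + s - a).
have k2 := psSg (a - b).
have k3 := psSg (a - s - b).
have k4 := psSg (b - a).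
move: h1 h2 h3 h4 h5 h6 k1 k2 k3 k4; rewrite /s /qnorm.
set G1 := g (b + _); set G2 := g (a - _).
dotv_expand; rewrite ?(dotv_symmetrize_sym hSgh) ?dotv_symmetrize.
move=> *; lra.
Qed.

Lemma consecutive_step_estimate n (g : 'cV[R]_n -> R) (gradg : 'cV[R]_n -> 'cV[R]_n)
    (Sg Sgh T : 'M[R]_n) (y_ y0 y1 w0 w1 : 'cV[R]_n) (Q0 Q1 : R) :
  self_adjoint Sgh -> self_adjoint T -> psd Sg -> quad_sandwich g gradg Sg Sgh ->
  psd (2^-1 *: Sgh + T) ->
  0 <= Q0 - Q1 + dotv (gradg y0 + (Sgh + T) *m (y1 - y0) + w1) (y0 - y1) ->
  0 <= Q1 - Q0 + dotv (gradg y_ + (Sgh + T) *m (y0 - y_) + w0) (y1 - y0) ->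
  0 <= qnorm (Sgh + T) (y0 - y_) - qnorm (Sgh + T) (y1 - y0)
       + 2 * dotv (w0 - w1) (y1 - y0).
Proof.
move=> hSgh hT psSg sandwich psGT vi1 vi0.
have := dotv_grad_increment_ge y_ y0 y1 hSgh psSg sandwich.
have := psGT (y1 - y0 - (y0 - y_)).
move: vi1 vi0; rewrite /qnorm; dotv_expand.
rewrite ?(dotvC (Sgh *m _)) ?(dotvC (T *m _)).
rewrite ?(dotv_symmetrize_sym hSgh) ?(dotv_symmetrize_sym hT) ?dotv_symmetrize.
move=> *; lra.
Qed.

Lemma alpha_lower_bound_gt0 (tau alpha : R) :
  0 < tau -> tau / Num.min (1 + tau) (1 + tau^-1) < alpha -> 0 < alpha.
Proof.
by move=> ht; apply: lt_trans; rewrite divr_gt0 // lt_min !addr_gt0 ?invr_gt0.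
Qed.

(* The two cases [tau <= 1] and [tau > 1] of the step-length condition; in
   each, the slack is a nonnegative multiple of [a1] plus one of the two
   squares [a0 + bb - 2 br] or [a0 + tau^2 bb + 2 tau br]. *)
Lemma alpha_coefficient_bound (sigma tau alpha a0 a1 bb br : R) :
  0 < sigma -> 0 < tau -> tau / Num.min (1 + tau) (1 + tau^-1) < alpha ->
  alpha <= 1 -> 0 <= a1 -> 0 <= a0 + bb - 2 * br ->
  0 <= a0 + tau ^+ 2 * bb + 2 * tau * br ->
  (1 - alpha) * sigma * (a0 + (tau - 1) * a1)
    + alpha * sigma * (2 * (1 - tau) * br - bb - (2 - tau) * a1)
    + (Num.min tau (1 + tau - tau ^+ 2) * alpha) * sigma * bb
  <= (1 - alpha * Num.min tau tau^-1) * sigma * (a0 - a1).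
Proof.
move=> hs ht hal ha1 h1 hA hB.
have ti_gt0 : 0 < tau^-1 by rewrite invr_gt0.
have alpha_gt0 := alpha_lower_bound_gt0 ht hal.
have [tle1|tgt1] := lerP tau 1.
- have ti_ge1 : 1 <= tau^-1 by rewrite invr_ge1 // unitfE gt_eqF.
  have -> : Num.min tau tau^-1 = tau by apply/min_idPl; lra.
  have -> : Num.min tau (1 + tau - tau ^+ 2) = tau.
    have : tau ^+ 2 <= 1 by rewrite expr_le1 //; lra.
    by move=> ?; apply/min_idPl; lra.
  have min1 : Num.min (1 + tau) (1 + tau^-1) = 1 + tau by apply/min_idPl; lra.
  rewrite min1 ltr_pdivrMr in hal; last lra.
  have k1 : 0 <= sigma * alpha * (1 - tau) * (a0 + bb - 2 * br).
    by do ! apply: mulr_ge0; lra.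
  have k2 : 0 <= sigma * (alpha * (1 + tau) - tau) * a1.
    by do ! apply: mulr_ge0; lra.
  lra.
- have ti_lt1 : tau^-1 < 1 by rewrite invf_lt1.
  have -> : Num.min tau tau^-1 = tau^-1 by apply/min_idPr; lra.
  have -> : Num.min tau (1 + tau - tau ^+ 2) = 1 + tau - tau ^+ 2.
    have : 1 < tau ^+ 2 by rewrite expr_gt1 //; lra.
    by move=> ?; apply/min_idPr; lra.
  have min2 : Num.min (1 + tau) (1 + tau^-1) = 1 + tau^-1 by apply/min_idPr; lra.
  rewrite min2 ltr_pdivrMr in hal; last lra.
  have k1 : 0 <= sigma * alpha * tau^-1 * (tau - 1) * (a0 + tau ^+ 2 * bb + 2 * tau * br).
    by do ! apply: mulr_ge0; lra.
  have k2 : 0 <= sigma * (alpha * (1 + tau^-1) - tau) * a1.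
    by do ! apply: mulr_ge0; lra.
  have slackE : (1 - alpha) * sigma * (a0 + (tau - 1) * a1)
    + alpha * sigma * (2 * (1 - tau) * br - bb - (2 - tau) * a1)
    + ((1 + tau - tau ^+ 2) * alpha) * sigma * bb
    - (1 - alpha * tau^-1) * sigma * (a0 - a1)
    = - (sigma * alpha * tau^-1 * (tau - 1) * (a0 + tau ^+ 2 * bb + 2 * tau * br))
      - sigma * (alpha * (1 + tau^-1) - tau) * a1.
    by field; rewrite gt_eqF.
  lra.
Qed.

Lemma dotv_shift_diff nz (w r : 'cV[R]_nz) (k : R) : k != 0 ->
  k^-1 * (dotv w w - dotv (w + k *: r) (w + k *: r)) = - 2 * dotv w r - k * dotv r r.
Proof. by move=> k0; dotv_expand; rewrite (dotvC r w); field. Qed.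

(* In [Z]: [ax], [ax0], [ax1] stand for [A^* x], [A^* x^(k+1)], [A^* x^(k+2)],
   likewise [by_], [by0], [by1]; [zk] is [z^k], so [z0], [z1] are [z^(k+1)], [z^(k+2)].
   The three hypotheses are the x-step, y-step and consecutive y-steps estimates. *)
Lemma ipadmm_step_combination nz (ax ax0 ax1 by_ by0 by1 c z zk : 'cV[R]_nz)
    (sigma tau alpha P1 Px Q1 Qy GX GY KX KY KR : R) :
  0 < sigma -> 0 < tau -> tau / Num.min (1 + tau) (1 + tau^-1) < alpha ->
  alpha <= 1 ->
  let r0 := ax0 + by0 - c in let r1 := ax1 + by1 - c in
  let z0 := zk + (tau * sigma) *: r0 in let z1 := z0 + (tau * sigma) *: r1 in
  let b := by1 - by0 in
  2 * (P1 - Px + GX) <= KX + (1 - alpha) * sigma / 2 * dotv (ax1 - ax0) (ax1 - ax0)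
                        + 2 * dotv (z0 + sigma *: (ax1 + by0 - c)) (ax - ax1) ->
  2 * (Q1 - Qy + GY) <= KY + Num.min tau (1 + tau - tau ^+ 2) * alpha * sigma * dotv b b
                        + 2 * dotv (z0 + sigma *: r1) (by_ - by1) ->
  0 <= KR + 2 * dotv (zk + sigma *: r0 - (z0 + sigma *: r1)) b ->
  2 * (P1 + Q1 - Px - Qy + (GX + dotv (ax1 - ax) z) + (GY + dotv (by1 - by_) z)
       + dotv (z0 + sigma *: r1 - z) (- (ax + by_ - c)))
  <= (tau * sigma)^-1 * (dotv (z0 - z) (z0 - z) - dotv (z1 - z) (z1 - z))
     + KX + KY
     + sigma * (dotv (ax + by0 - c) (ax + by0 - c) - dotv (ax + by1 - c) (ax + by1 - c))
     + (1 - alpha * Num.min tau tau^-1) * sigma * (dotv r0 r0 - dotv r1 r1)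
     + alpha * KR.
Proof.
move=> hs ht hal hal1 r0 r1 z0 z1 b hX hY hR.
have alpha_ge0 := ltW (alpha_lower_bound_gt0 ht hal).
have sq_bBr : 0 <= dotv r0 r0 + dotv b b - 2 * dotv b r0.
  by have := dotv_ge0 (b - r0); dotv_expand; rewrite ?dotv_symmetrize; lra.
have sq_rDb : 0 <= dotv r0 r0 + tau ^+ 2 * dotv b b + 2 * tau * dotv b r0.
  have := dotv_ge0 (r0 + tau *: b); dotv_expand; rewrite ?dotv_symmetrize expr2.
  lra.
have := alpha_coefficient_bound hs ht hal hal1 (dotv_ge0 r1) sq_bBr sq_rDb.
have := mulr_ge0 alpha_ge0 hR.
have : 0 <= (1 - alpha) * sigma * dotv (r1 - b + r0) (r1 - b + r0).
  by apply: mulr_ge0; [apply: mulr_ge0; lra | exact: dotv_ge0].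
have -> : z1 - z = (z0 - z) + (tau * sigma) *: r1 by rewrite addrAC.
rewrite dotv_shift_diff; last by rewrite mulf_neq0 // gt_eqF.
move: hX hY; rewrite /z0 /b /r0 /r1; dotv_expand; rewrite ?dotv_symmetrize.
move=> *; lra.
Qed.

End Estimates.

Section MajorizedIPADMM.
Variables (R : realType) (nx ny nz : nat).
Variables (p : 'cV[R]_nx -> \bar R) (q : 'cV[R]_ny -> \bar R).
Variables (f : 'cV[R]_nx -> R) (g : 'cV[R]_ny -> R).
Variables (gradf : 'cV[R]_nx -> 'cV[R]_nx) (gradg : 'cV[R]_ny -> 'cV[R]_ny).
Variables (A : 'M[R]_(nx, nz)) (B : 'M[R]_(ny, nz)) (c : 'cV[R]_nz).
Variables (Sf Sfh S : 'M[R]_nx) (Sg Sgh T : 'M[R]_ny) (sigma tau alpha : R).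
Variables (xs : nat -> 'cV[R]_nx) (ys : nat -> 'cV[R]_ny) (zs : nat -> 'cV[R]_nz).

Hypotheses (p_proper : forall u, p u != -oo%E) (q_proper : forall v, q v != -oo%E).
Hypotheses (p_convex : econvex p) (q_convex : econvex q).
Hypotheses (Sf_sym : self_adjoint Sf) (Sfh_sym : self_adjoint Sfh) (S_sym : self_adjoint S).
Hypotheses (Sg_sym : self_adjoint Sg) (Sgh_sym : self_adjoint Sgh) (T_sym : self_adjoint T).
Hypotheses (Sf_psd : psd Sf) (Sg_psd : psd Sg) (Sgh_psd : psd Sgh).
Hypotheses (f_sandwich : quad_sandwich f gradf Sf Sfh).
Hypotheses (g_sandwich : quad_sandwich g gradg Sg Sgh).
Hypotheses (sigma_gt0 : 0 < sigma) (tau_gt0 : 0 < tau).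
Hypotheses (alpha_gt : tau / Num.min (1 + tau) (1 + tau^-1) < alpha) (alpha_le1 : alpha <= 1).
Hypotheses (Fx_psd : psd (Sfh + S)) (GT_psd : psd (2^-1 *: Sgh + T)).
Hypothesis Hf_psd : psd (2^-1 *: Sf + S + ((1 - alpha) * sigma / 2) *: (A *m A^T)).
Hypothesis Mg_psd :
  psd (2^-1 *: Sg + T + (Num.min tau (1 + tau - tau ^+ 2) * alpha * sigma) *: (B *m B^T)).
Hypotheses (p_xs0 : p (xs 0) \is a fin_num) (q_ys0 : q (ys 0) \is a fin_num).
Hypothesis x_update : forall k x',
  (xobj p gradf Sfh S A B c sigma (xs k) (ys k) (zs k) (xs k.+1)
   <= xobj p gradf Sfh S A B c sigma (xs k) (ys k) (zs k) x')%E.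
Hypothesis y_update : forall k y',
  (yobj q gradg Sgh T A B c sigma (xs k.+1) (ys k) (zs k) (ys k.+1)
   <= yobj q gradg Sgh T A B c sigma (xs k.+1) (ys k) (zs k) y')%E.
Hypothesis z_update : forall k,
  zs k.+1 = zs k + (tau * sigma) *: resid A B c (xs k.+1) (ys k.+1).

Lemma xobjE k x' : xobj p gradf Sfh S A B c sigma (xs k) (ys k) (zs k) x' =
  (p x' + (subproblem_smooth (gradf (xs k)) (xs k) (Sfh + S) (zs k)
             (B^T *m ys k - c) A sigma x')%:E)%E.
Proof. by rewrite /xobj /subproblem_smooth !addrA. Qed.

Lemma yobjE k y' : yobj q gradg Sgh T A B c sigma (xs k.+1) (ys k) (zs k) y' =
  (q y' + (subproblem_smooth (gradg (ys k)) (ys k) (Sgh + T) (zs k)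
             (A^T *m xs k.+1 - c) B sigma y')%:E)%E.
Proof.
have sumE v : A^T *m xs k.+1 + B^T *m v - c = B^T *m v + (A^T *m xs k.+1 - c).
  by rewrite addrAC addrC.
by rewrite /yobj /subproblem_smooth !sumE.
Qed.

Lemma xs_fin j : p (xs j) \is a fin_num.
Proof.
elim: j => // j IH; apply: fin_num_addr (p_proper _) _.
by apply: le_lt_trans (x_update j (xs j)) _; rewrite xobjE -(fineK IH) -EFinD ltry.
Qed.

Lemma ys_fin j : q (ys j) \is a fin_num.
Proof.
elim: j => // j IH; apply: fin_num_addr (q_proper _) _.
by apply: le_lt_trans (y_update j (ys j)) _; rewrite yobjE -(fineK IH) -EFinD ltry.
Qed.

Lemma x_update_vi j x' : p x' \is a fin_num ->
  0 <= fine (p x') - fine (p (xs j.+1))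
       + dotv (gradf (xs j) + (Sfh + S) *m (xs j.+1 - xs j)
               + A *m (zs j + sigma *: resid A B c (xs j.+1) (ys j))) (x' - xs j.+1).
Proof.
rewrite /resid -[A^T *m _ + _ - c]addrA; move=> px'.
refine (subproblem_vi _ p_convex (xs_fin _) _ px').
- by rewrite raddfD /= Sfh_sym S_sym.
- by move=> v; rewrite -!xobjE.
Qed.

Lemma y_update_vi j y' : q y' \is a fin_num ->
  0 <= fine (q y') - fine (q (ys j.+1))
       + dotv (gradg (ys j) + (Sgh + T) *m (ys j.+1 - ys j)
               + B *m (zs j + sigma *: resid A B c (xs j.+1) (ys j.+1))) (y' - ys j.+1).
Proof.
rewrite /resid (addrAC (A^T *m _)) (addrC (A^T *m _ - c)) => qy'.
refine (subproblem_vi _ q_convex (ys_fin _) _ qy').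
- by rewrite raddfD /= Sgh_sym T_sym.
- by move=> v; rewrite -!yobjE.
Qed.

Lemma x_block_estimate k x : p x \is a fin_num ->
  2 * (fine (p (xs k.+2)) - fine (p x) + dotv (xs k.+2 - x) (gradf x))
  <= qnorm (Sfh + S) (xs k.+1 - x) - qnorm (Sfh + S) (xs k.+2 - x)
     + (1 - alpha) * sigma / 2
       * dotv (A^T *m xs k.+2 - A^T *m xs k.+1) (A^T *m xs k.+2 - A^T *m xs k.+1)
     + 2 * dotv (zs k.+1 + sigma *: resid A B c (xs k.+2) (ys k.+1))
                (A^T *m x - A^T *m xs k.+2).
Proof.
move=> px; have := Hf_psd (xs k.+2 - xs k.+1); rewrite qnorm_add_gram => hE.
have := block_step_estimate Sf_sym Sfh_sym S_sym Sf_psd f_sandwich (x_update_vi k.+1 px) hE.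
by rewrite (dotv_mulmxl A) !mulmxBr.
Qed.

Lemma y_block_estimate k y : q y \is a fin_num ->
  2 * (fine (q (ys k.+2)) - fine (q y) + dotv (ys k.+2 - y) (gradg y))
  <= qnorm (Sgh + T) (ys k.+1 - y) - qnorm (Sgh + T) (ys k.+2 - y)
     + Num.min tau (1 + tau - tau ^+ 2) * alpha * sigma
       * dotv (B^T *m ys k.+2 - B^T *m ys k.+1) (B^T *m ys k.+2 - B^T *m ys k.+1)
     + 2 * dotv (zs k.+1 + sigma *: resid A B c (xs k.+2) (ys k.+2))
                (B^T *m y - B^T *m ys k.+2).
Proof.
move=> qy; have := Mg_psd (ys k.+2 - ys k.+1); rewrite qnorm_add_gram => hE.
have := block_step_estimate Sg_sym Sgh_sym T_sym Sg_psd g_sandwich (y_update_vi k.+1 qy) hE.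
by rewrite (dotv_mulmxl B) !mulmxBr.
Qed.

Lemma y_consecutive_estimate k :
  0 <= qnorm (Sgh + T) (ys k.+1 - ys k) - qnorm (Sgh + T) (ys k.+2 - ys k.+1)
       + 2 * dotv (zs k + sigma *: resid A B c (xs k.+1) (ys k.+1)
                   - (zs k.+1 + sigma *: resid A B c (xs k.+2) (ys k.+2)))
                  (B^T *m ys k.+2 - B^T *m ys k.+1).
Proof.
have := consecutive_step_estimate Sgh_sym T_sym Sg_psd g_sandwich GT_psd
  (y_update_vi k.+1 (ys_fin k.+1)) (y_update_vi k (ys_fin k.+2)).
by rewrite -mulmxBr (dotv_mulmxl B) mulmxBr.
Qed.

(* [zs i + sigma r^(i+1)] is the paper's [z~^(i+1)]. *)
Definition gap x y z i :=
  fine (p (xs i.+1)) + fine (q (ys i.+1)) - fine (p x) - fine (q y)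
  + (dotv (xs i.+1 - x) (gradf x + A *m z) + dotv (ys i.+1 - y) (gradg y + B *m z)
     + dotv (zs i + sigma *: resid A B c (xs i.+1) (ys i.+1) - z) (- resid A B c x y)).

Definition lyapunov x y z i :=
  (tau * sigma)^-1 * dotv (zs i - z) (zs i - z)
  + qnorm (Sfh + S) (xs i - x) + qnorm (Sgh + T) (ys i - y)
  + sigma * dotv (resid A B c x (ys i)) (resid A B c x (ys i))
  + (1 - alpha * Num.min tau tau^-1) * sigma
    * dotv (resid A B c (xs i) (ys i)) (resid A B c (xs i) (ys i))
  + alpha * qnorm (Sgh + T) (ys i - ys i.-1).

Lemma lyapunov_decrease x y z k : p x \is a fin_num -> q y \is a fin_num ->
  2 * gap x y z k.+1 <= lyapunov x y z k.+1 - lyapunov x y z k.+2.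
Proof.
move=> px qy.
have := x_block_estimate k px; have := y_block_estimate k qy.
have := y_consecutive_estimate k.
rewrite [zs k.+1]z_update /resid => hR hY hX.
have := ipadmm_step_combination (ax := A^T *m x) (ax0 := A^T *m xs k.+1)
  (ax1 := A^T *m xs k.+2) (by_ := B^T *m y) (by0 := B^T *m ys k.+1)
  (by1 := B^T *m ys k.+2) z sigma_gt0 tau_gt0 alpha_gt alpha_le1 hX hY hR.
have dotv_shift n (M : 'M[R]_(n, nz)) (u v w : 'cV[R]_n) :
  dotv (u - v) (w + M *m z) = dotv (u - v) w + dotv (M^T *m u - M^T *m v) z.
  by rewrite dotvDr (dotv_mulmxr M) mulmxBr dotvC.
rewrite /gap /lyapunov /= !dotv_shift [zs k.+2]z_update [zs k.+1]z_update /resid.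
lra.
Qed.

Lemma lyapunov_ge0 x y z i : 0 <= lyapunov x y z i.
Proof.
have alpha_ge0 := ltW (alpha_lower_bound_gt0 tau_gt0 alpha_gt).
have m_le1 : Num.min tau tau^-1 <= 1.
  have [tau_le1|tau_gt1] := lerP tau 1; rewrite ge_min ?tau_le1 //.
  by rewrite invf_le1 // (ltW tau_gt1) orbT.
have m_ge0 : 0 <= Num.min tau tau^-1 by rewrite le_min !ltW ?invr_gt0.
have coef_ge0 : 0 <= 1 - alpha * Num.min tau tau^-1.
  have : alpha * Num.min tau tau^-1 <= 1 * 1 by apply: ler_pM.
  lra.
have G_psd := psd_add_half Sgh_psd GT_psd.
have z_ge0 : 0 <= (tau * sigma)^-1 * dotv (zs i - z) (zs i - z).
  by rewrite mulr_ge0 ?dotv_ge0 // invr_ge0 mulr_ge0 // ltW.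
have res_ge0 := mulr_ge0 (ltW sigma_gt0) (dotv_ge0 (resid A B c x (ys i))).
have r_ge0 := mulr_ge0 (mulr_ge0 coef_ge0 (ltW sigma_gt0))
  (dotv_ge0 (resid A B c (xs i) (ys i))).
have x_ge0 := Fx_psd (xs i - x); have y_ge0 := G_psd (ys i - y).
have xi_ge0 := mulr_ge0 alpha_ge0 (G_psd (ys i - ys i.-1)).
rewrite /lyapunov; lra.
Qed.

Lemma sum_gap_le x y z n : p x \is a fin_num -> q y \is a fin_num ->
  2 * \sum_(1 <= i < n.+1) gap x y z i <= lyapunov x y z 1 - lyapunov x y z n.+1.
Proof.
move=> px qy; elim: n => [|n IH]; first by rewrite big_geq // mulr0 subrr.
by rewrite big_nat_recr //= mulrDr; have := lyapunov_decrease z n px qy; lra.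
Qed.

Lemma avg_gap_le x y z k : (1 <= k)%N -> p x \is a fin_num -> q y \is a fin_num ->
  k%:R^-1 * \sum_(1 <= i < k.+1) gap x y z i <= lyapunov x y z 1 / (2 * k%:R).
Proof.
move=> k_gt0 px qy; have k0 : (k%:R : R) != 0 by rewrite pnatr_eq0 -lt0n.
have -> : lyapunov x y z 1 / (2 * k%:R) = k%:R^-1 * (lyapunov x y z 1 / 2) by field.
apply: ler_wpM2l; first by rewrite invr_ge0 ler0n.
by have := sum_gap_le z k px qy; have := lyapunov_ge0 x y z k.+1; lra.
Qed.

Lemma ergodic_gap_le k x y z : (1 <= k)%N ->
  ((p (ergavg xs k) + q (ergavg ys k)) - (p x + q y)
   + (dotv (ergavg xs k - x) (gradf x + A *m z)
      + dotv (ergavg ys k - y) (gradg y + B *m z)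
      + dotv (ergavg (fun j => zs j.-1 + sigma *: resid A B c (xs j) (ys j)) k - z)
             (- resid A B c x y))%:E
   <= (lyapunov x y z 1 / (2 * k%:R))%:E)%E.
Proof.
move=> k_gt0.
have [px|/negP px] := boolP (p x \is a fin_num); last first.
  have -> : p x = +oo%E by move: px; rewrite fin_numE p_proper /= => /negP/negPn/eqP.
  by rewrite addye ?q_proper //= addeNy addNye leNye.
have [qy|/negP qy] := boolP (q y \is a fin_num); last first.
  have -> : q y = +oo%E by move: qy; rewrite fin_numE q_proper /= => /negP/negPn/eqP.
  by rewrite addey //= addeNy addNye leNye.
have k0 : (k%:R : R) != 0 by rewrite pnatr_eq0 -lt0n.
have jensen_p := econvex_ergavg p_convex xs_fin k_gt0.
have jensen_q := econvex_ergavg q_convex ys_fin k_gt0.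
apply: le_trans (leeD2r _ (leeD2r _ (leeD jensen_p jensen_q))) _.
rewrite -(fineK px) -(fineK qy) -!EFinD lee_fin !dotv_ergavg //=.
have := avg_gap_le z k_gt0 px qy.
rewrite /gap !big_split /= !sumr_const_nat subn1 /= !mulNrn.
have Px_avg : k%:R^-1 * (fine (p x) *+ k) = fine (p x) by rewrite -mulr_natr; field.
have Qy_avg : k%:R^-1 * (fine (q y) *+ k) = fine (q y) by rewrite -mulr_natr; field.
lra.
Qed.

End MajorizedIPADMM.

Unset Implicit Arguments.

Theorem lemma5p2 (R : realType) (nx ny nz : nat)
  (p : 'cV[R]_nx -> \bar R) (q : 'cV[R]_ny -> \bar R)
  (f : 'cV[R]_nx -> R) (g : 'cV[R]_ny -> R)
  (gradf : 'cV[R]_nx -> 'cV[R]_nx) (gradg : 'cV[R]_ny -> 'cV[R]_ny)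
  (A : 'M[R]_(nx, nz)) (B : 'M[R]_(ny, nz)) (c : 'cV[R]_nz)
  (Sf Sfh S : 'M[R]_nx) (Sg Sgh T : 'M[R]_ny)
  (sigma tau alpha : R)
  (xs : nat -> 'cV[R]_nx) (ys : nat -> 'cV[R]_ny) (zs : nat -> 'cV[R]_nz) :
  (* the problem data *)
  closed_proper_convex p -> closed_proper_convex q ->
  convex_fun f -> is_gradient f gradf -> lipschitz_map gradf ->
  convex_fun g -> is_gradient g gradg -> lipschitz_map gradg ->
  self_adjoint Sf -> psd Sf -> self_adjoint Sfh -> psd Sfh -> psd (Sfh - Sf) ->
  self_adjoint Sg -> psd Sg -> self_adjoint Sgh -> psd Sgh -> psd (Sgh - Sg) ->
  quad_sandwich f gradf Sf Sfh -> quad_sandwich g gradg Sg Sgh ->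
  (* algorithm parameters *)
  0 < sigma -> 0 < tau ->
  self_adjoint S -> self_adjoint T ->
  psd (Sfh + S + sigma *: (A *m A^T)) -> psd (Sgh + T + sigma *: (B *m B^T)) ->
  (* the iterates of the Majorized iPADMM *)
  (p (xs 0%N) < +oo)%E -> (q (ys 0%N) < +oo)%E ->
  (forall (k : nat) (x' : 'cV[R]_nx),
     (xobj p gradf Sfh S A B c sigma (xs k) (ys k) (zs k) (xs k.+1)
      <= xobj p gradf Sfh S A B c sigma (xs k) (ys k) (zs k) x')%E) ->
  (forall (k : nat) (y' : 'cV[R]_ny),
     (yobj q gradg Sgh T A B c sigma (xs k.+1) (ys k) (zs k) (ys k.+1)
      <= yobj q gradg Sgh T A B c sigma (xs k.+1) (ys k) (zs k) y')%E) ->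
  (forall k : nat,
     zs k.+1 = zs k + (tau * sigma) *: resid A B c (xs k.+1) (ys k.+1)) ->
  (* assumptions of the lemma *)
  tau < (1 + Num.sqrt 5) / 2 ->
  tau / Num.min (1 + tau) (1 + tau^-1) < alpha -> alpha <= 1 ->
  psd (Sfh + S) ->
  psd (2^-1 *: Sf + S + ((1 - alpha) * sigma / 2) *: (A *m A^T)) ->
  psd (2^-1 *: Sgh + T) ->
  pd (2^-1 *: Sg + T
      + (Num.min tau (1 + tau - tau ^+ 2) * alpha * sigma) *: (B *m B^T)) ->
  forall k : nat, (1 <= k)%N ->
  forall (x : 'cV[R]_nx) (y : 'cV[R]_ny) (z : 'cV[R]_nz),
  let xh := ergavg xs k in
  let yh := ergavg ys k in
  let zh := ergavg (fun j => zs j.-1 + sigma *: resid A B c (xs j) (ys j)) k in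
  let r1 := resid A B c (xs 1%N) (ys 1%N) in
  let phi1 := (tau * sigma)^-1 * dotv (zs 1%N - z) (zs 1%N - z)
              + qnorm (Sfh + S) (xs 1%N - x) + qnorm (Sgh + T) (ys 1%N - y)
              + sigma * dotv (resid A B c x (ys 1%N)) (resid A B c x (ys 1%N)) in
  let xi1 := qnorm (Sgh + T) (ys 1%N - ys 0%N) in
  ((p xh + q yh) - (p x + q y)
   + (dotv (xh - x) (gradf x + A *m z) + dotv (yh - y) (gradg y + B *m z)
      + dotv (zh - z) (- resid A B c x y))%:E
   <= ((phi1 + (1 - alpha * Num.min tau tau^-1) * sigma * dotv r1 r1
        + alpha * xi1) / (2 * k%:R))%:E)%E.
Proof.
(* Only the two-sided bounds on f and g are used, not their differentiability or
   Lipschitz data. *)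
move=> [[p_proper _] p_convex _] [[q_proper _] q_convex _] _ _ _ _ _ _
  Sf_sym Sf_psd Sfh_sym _ _ Sg_sym Sg_psd Sgh_sym Sgh_psd _ f_sandwich g_sandwich
  sigma_gt0 tau_gt0 S_sym T_sym _ _ px0 qy0 x_update y_update z_update _
  alpha_gt alpha_le1 Fx_psd Hf_psd GT_psd /pd_psd Mg_psd k k_gt0 x y z.
have p_xs0 : p (xs 0%N) \is a fin_num by rewrite fin_numE p_proper -ltey.
have q_ys0 : q (ys 0%N) \is a fin_num by rewrite fin_numE q_proper -ltey.
exact: (ergodic_gap_le p_proper q_proper p_convex q_convex Sf_sym Sfh_sym S_sym
  Sg_sym Sgh_sym T_sym Sf_psd Sg_psd Sgh_psd f_sandwich g_sandwich sigma_gt0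
  tau_gt0 alpha_gt alpha_le1 Fx_psd GT_psd Hf_psd Mg_psd p_xs0 q_ys0
  x_update y_update z_update x y z k_gt0).
Qed.
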